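(* Let $Q, N, K \ge 1$ and $L_{\max}\ge 0$ be integers and $T_{\mathrm{PRI}}>0$. Let $\mathbf{s}_m = (s_m(1),\dots,s_m(N))^T \in \mathbb{C}^N$ be unimodular, i.e. $|s_m(n)|=1$ for all $n$. For $k=1,\dots,K$ let $L^{(k)} \in\{0,\dots,L_{\max}\}$ be integers, $\beta^{(k)}\in\mathbb{C}$, and let $f^{(k)}\in\mathbb{R}$ be Doppler frequencies which are almost surely pairwise distinct. For $0\le L\le L_{\max}$ put $\mathbf{C}_{L} = [\mathbf{0}_{N\times L},\ \mathbf{I}_N,\ \mathbf{0}_{N\times (L_{\max}-L)}]$, and define $\mathbf{D}=[\mathbf{d}^{(1)},\dots,\mathbf{d}^{(K)}]\in\mathbb{C}^{Q\times K}$ with $\mathbf{d}^{(k)} = [1, e^{\mathrm{j}2\pi f^{(k)}T_{\mathrm{PRI}}},\dots, e^{\mathrm{j}2\pi f^{(k)}(Q-1)T_{\mathrm{PRI}}}]^T$, $\boldsymbol{\Lambda}=\mathrm{diag}(\beta^{(1)},\dots,\beta^{(K)})$, $\boldsymbol{\Gamma} = [\mathbf{C}_{L^{(1)}}^T\mathbf{s}_m,\dots,\mathbf{C}_{L^{(K)}}^T\mathbf{s}_m]^T$, and $\mathbf{Z}=\mathbf{D}\boldsymbol{\Lambda}\boldsymbol{\Gamma}\in\mathbb{C}^{n_1\times n_2}$ with $n_1=Q$, $n_2 = N+L_{\max}$. Define $g:\mathbb{R}\to\mathbb{R}$ by $g(x)=\lceil x\rceil - x$ if $\lceil x\rceil -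 x\le \tfrac12$ and $g(x) = x-\lfloor x\rfloor$ otherwise; set $\xi_t = \min_{i\neq j} g\left(T_{\mathrm{PRI}}|f^{(i)}-f^{(j)}|\right)$ and $\beta_Q(\xi_t) = \sup_{x\in[\xi_t,1/2]} \frac{\sin^2(\pi Q x)}{\sin^2(\pi x)}$. For $i,j\in\{1,\dots,K\}$ let $l_{ij}=L^{(i)}-L^{(j)}$ and $\gamma(l_{ij}) = \sum_{k=l_{ij}+1}^{N} s_m(k)\, s_m^*(k-l_{ij})$ (terms whose indices fall outside $\{1,\dots,N\}$ being omitted). If $K \le \frac{Q}{\sqrt{\beta_Q(\xi_t)}}$, then the coherences of $\mathbf{Z}$ satisfy $$\mu(U) \le \frac{Q}{Q-(K-1)\sqrt{\beta_Q(\xi_t)}},\qquad \mu(V)\le \frac{N+L_{\max}}{N - \sqrt{K-1}\sqrt{\sum_{i=1}^K\sum_{j\ne i}|\gamma(l_{ij})|^2}},$$ and, with probability $1$, $\mathbf{Z}$ obeys conditions A0 and A1 with $\mu_0 = \max\{\mu(U),\mu(V)\}$ and $\mu_1 = \sqrt{K}\,\mu_0$.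
   Context: Coherence: let $U\subseteq\mathbb{C}^{n_1}$ and $V\subseteq \mathbb{C}^{n_2}$ be the column space and row space of $\mathbf{Z}$ (spanned by the left, resp. right, singular vectors of the compact SVD $\mathbf{Z}=\sum_k \rho_k \mathbf{u}_k\mathbf{v}_k^H$). With $\mathbf{U}$ a matrix whose columns are the left singular vectors, $\mu(U) = \frac{n_1}{K}\max_{1\le i\le n_1}\|\mathbf{U}^{(i)}\|_2^2$, where $\mathbf{U}^{(i)}$ is the $i$-th row of $\mathbf{U}$ (equivalently $\frac{n_1}{K}\max_i \|P_U e_i\|^2$ with $P_U$ the orthogonal projection onto $U$); $\mu(V)$ is defined analogously with $n_2$ and the right singular vectors. Condition A0: $\max(\mu(U),\mu(V))\le\mu_0$. Condition A1: every entry of $\sum_{i}\mathbf{u}_i\mathbf{v}_i^H$ is bounded in absolute value by $\mu_1\sqrt{K/(n_1 n_2)}$. Here $\mathrm{j}=\sqrt{-1}$ and $^*$ denotes complex conjugation. The setting models the data matrix of one transmit–receive pair of a widely separated MIMO radar with $K$ targets over $Q$ pulses.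
   Formalization: The bound on μ(V) is asserted only when its denominator $N - \sqrt{K-1}\sqrt{\sum_{i=1}^K\sum_{j\ne i}|\gamma(l_{ij})|^2}$ is positive. The statement above fails without it. *)

From HB Require Import structures.
From mathcomp Require Import all_boot all_order all_algebra.
From mathcomp Require Import all_classical all_reals all_analysis.
From mathcomp Require Import complex.
Set Implicit Arguments. Unset Strict Implicit. Unset Printing Implicit Defensive.
Import Order.TTheory GRing.Theory Num.Theory.
Local Open Scope ring_scope.
Local Open Scope classical_set_scope.

Section Defs.
Variable R : realType.
Local Notation C := R[i].

Definition cabs (z : C) : R := Normc.normc z.
Definition cconj (z : C) : C := conjc z.

Definition mxH m n (A : 'M[C]_(m, n)) : 'M[C]_(n, m) := (map_mx cconj A)^T.

Definition expj (theta : R) : C := Complex (cos theta) (sin theta).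

(* C_L = [0_{N x L}, I_N, 0_{N x (Lmax - L)}] *)
Definition Cshift (N Lmax L : nat) : 'M[C]_(N, N + Lmax) :=
  \matrix_(i < N, p < N + Lmax) ((nat_of_ord p == i + L)%N)%:R.

Definition Dmat (Q K : nat) (T : R) (f : 'I_K -> R) : 'M[C]_(Q, K) :=
  \matrix_(q < Q, k < K) expj (2 * pi * f k * q%:R * T).

Definition Lmat K (beta : 'I_K -> C) : 'M[C]_K := diag_mx (\row_k beta k).

Definition Gmat (N Lmax K : nat) (L : 'I_K -> nat) (s : 'cV[C]_N)
  : 'M[C]_(K, N + Lmax) :=
  \matrix_(k < K, p < N + Lmax) (((Cshift N Lmax (L k))^T *m s) p ord0).

Definition Zmat (Q N Lmax K : nat) (T : R) (f : 'I_K -> R) (beta : 'I_K -> C)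
  (L : 'I_K -> nat) (s : 'cV[C]_N) : 'M[C]_(Q, N + Lmax) :=
  Dmat Q T f *m Lmat beta *m Gmat Lmax L s.

(* g(x) : distance of x to the nearest integer, as defined in the paper *)
Definition gdist (x : R) : R :=
  if (Num.ceil x)%:~R - x <= 1 / 2 then (Num.ceil x)%:~R - x
  else x - (Num.floor x)%:~R.

(* xi_t = min_{i <> j} g(T |f_i - f_j|); (the value 1/2 is the neutral element,
   harmless since g <= 1/2; it is the value used when K = 1) *)
Definition xi_t K (T : R) (f : 'I_K -> R) : R :=
  \big[Num.min/(1 / 2)]_(i < K)
    \big[Num.min/(1 / 2)]_(j < K | i != j) gdist (T * `|f i - f j|).

Definition betaQ (Q : nat) (xi : R) : R :=
  sup [set (sin (pi * Q%:R * x) ^+ 2 / sin (pi * x) ^+ 2) | x in `[xi, 1 / 2]%classic].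

(* gamma(l) = sum_{k} s(k) s^*(k - l), over indices in range (0-based here) *)
Definition gammaS N (s : 'cV[C]_N) (l : int) : C :=
  \sum_(k < N) \sum_(k' < N | (k%:Z - k'%:Z == l)) s k ord0 * cconj (s k' ord0).

Definition coherence (n K r : nat) (W : 'M[C]_(n, r)) : R :=
  n%:R / K%:R * \big[Num.max/0]_(i < n) \sum_(c < r) cabs (W i c) ^+ 2.

Definition compact_svd m n r (Z : 'M[C]_(m, n)) (U : 'M[C]_(m, r))
  (rho : 'I_r -> R) (V : 'M[C]_(n, r)) : Prop :=
  [/\ mxH U *m U = 1%:M, mxH V *m V = 1%:M, (forall c, 0 < rho c) &
      Z = U *m diag_mx (\row_c Complex (rho c) 0) *m mxH V].

End Defs.

From HB Require Import structures.
From mathcomp Require Import all_boot all_order all_algebra.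
From mathcomp Require Import all_classical all_reals all_analysis.
From mathcomp Require Import complex.
From mathcomp Require Import ring lra zify.
Import Order.TTheory GRing.Theory Num.Theory.
Local Open Scope ring_scope.
Set Implicit Arguments. Unset Strict Implicit. Unset Printing Implicit Defensive.

(* The left singular vectors factor as U = Z V S^-1 = D X and the right ones as
   V = Gamma^H Y.  If W = A X has orthonormal columns and |A x|^2 >= c |x|^2,
   then every row of W weighs at most 1 / c times the corresponding row of A;
   the rows of D weigh K and those of Gamma^H at most K.  The constant c comes
   from the Gram matrices: D^H D has diagonal Q and off-diagonal entries the
   Dirichlet kernel at T (f_l - f_k), of modulus at most sqrt beta_Q(xi_t)
   (aliasing, xi_t = 0, is excluded by the hypothesis on K); Gamma Gamma^H has
   diagonal N and off-diagonal entries gamma(l_ij), handled by Cauchy-Schwarz.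
   Condition A1 is Cauchy-Schwarz on a row of U against a row of V. *)

Section RealCauchySchwarz.
Variable F : realFieldType.

Lemma sum_mul_sqr_le (I : finType) (P : pred I) (a b : I -> F) :
  (\sum_(i | P i) a i * b i) ^+ 2 <=
  (\sum_(i | P i) a i ^+ 2) * (\sum_(i | P i) b i ^+ 2).
Proof.
set A := \sum_(i | P i) a i ^+ 2; set B := \sum_(i | P i) b i ^+ 2.
set S := \sum_(i | P i) a i * b i.
have double_sum (G : I -> F) (H : I -> F) :
    \sum_(i | P i) \sum_(j | P j) G i * H j =
    (\sum_(i | P i) G i) * (\sum_(j | P j) H j).
  by rewrite mulr_suml; apply: eq_bigr => i _; rewrite mulr_sumr.
have lagrange : \sum_(i | P i) \sum_(j | P j) (a i * b j - a j * b i) ^+ 2 =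
                2 * (A * B - S ^+ 2).
  transitivity (\sum_(i | P i) \sum_(j | P j) (a i ^+ 2 * b j ^+ 2) +
                \sum_(i | P i) \sum_(j | P j) (b i ^+ 2 * a j ^+ 2) -
                2 * \sum_(i | P i) \sum_(j | P j) ((a i * b i) * (a j * b j))).
    rewrite mulr_sumr -big_split -sumrB /=; apply: eq_bigr => i _.
    rewrite mulr_sumr -big_split -sumrB /=; apply: eq_bigr => j _; ring.
  by rewrite !double_sum -/A -/B -/S; ring.
have : 0 <= 2 * (A * B - S ^+ 2).
  rewrite -lagrange; apply: sumr_ge0 => i _; apply: sumr_ge0 => j _.
  exact: sqr_ge0.
lra.
Qed.

End RealCauchySchwarz.

Section OffDiagonalSums.
Variables (F : rcfType) (K : nat).
Implicit Types (a : 'I_K -> F) (b : 'I_K -> 'I_K -> F).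

Lemma sum_offdiag_const (G : 'I_K -> F) :
  \sum_k \sum_(l | l != k) G k = (K%:R - 1) * \sum_k G k.
Proof.
rewrite mulr_sumr; apply: eq_bigr => k _.
rewrite sumr_const cardC1 card_ord -subn1 -[G k *+ _]mulr_natl natrB //.
exact: leq_ltn_trans (leq0n k) (ltn_ord k).
Qed.

Lemma sum_offdiag_swap (G : 'I_K -> 'I_K -> F) :
  \sum_k \sum_(l | l != k) G l k = \sum_k \sum_(l | l != k) G k l.
Proof.
rewrite (exchange_big_dep xpredT) //=; apply: eq_bigr => k _.
by apply: eq_bigl => l; rewrite eq_sym.
Qed.

Lemma offdiag_const_le a (c : F) : 0 <= c ->
  \sum_k \sum_(l | l != k) a k * c * a l <= c * (K%:R - 1) * \sum_k a k ^+ 2.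
Proof.
move=> c_ge0.
have -> : c * (K%:R - 1) * \sum_k a k ^+ 2 =
          \sum_k \sum_(l | l != k) (c / 2 * a k ^+ 2 + c / 2 * a l ^+ 2).
  symmetry; under eq_bigr do rewrite big_split /=.
  rewrite big_split /= (sum_offdiag_swap (fun k _ => c / 2 * a k ^+ 2)).
  by rewrite sum_offdiag_const -mulr_sumr; field.
apply: ler_sum => k _; apply: ler_sum => l _.
have : 0 <= c * (a k - a l) ^+ 2 by rewrite mulr_ge0 ?sqr_ge0.
lra.
Qed.

Lemma offdiag_cauchy_schwarz_le a b :
  \sum_k \sum_(l | l != k) a k * b k l * a l <=
  Num.sqrt (\sum_k \sum_(l | l != k) b k l ^+ 2) * \sum_k a k ^+ 2.
Proof.
set S := (X in X <= _); set B := \sum_k _; set A2 := \sum_k a k ^+ 2.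
have B_ge0 : 0 <= B by do 2!apply: sumr_ge0 => ? _; exact: sqr_ge0.
have A2_ge0 : 0 <= A2 by apply: sumr_ge0 => ? _; exact: sqr_ge0.
have [S_le0|S_gt0] := lerP S 0.
  by apply: le_trans S_le0 _; rewrite mulr_ge0 ?sqrtr_ge0.
rewrite -(ler_sqr (x:=_) (y:=_)) ?nnegrE ?(ltW S_gt0) ?mulr_ge0 ?sqrtr_ge0 //.
rewrite exprMn sqr_sqrtr // /S /B !(pair_big_dep xpredT (fun k l => l != k)) /=.
set off := fun p : 'I_K * 'I_K => p.2 != p.1.
rewrite (eq_bigr (fun p => a p.1 * a p.2 * b p.1 p.2)) => [|p _]; last by ring.
apply: le_trans (sum_mul_sqr_le off _ _) _.
rewrite [_ * A2 ^+ 2]mulrC ler_wpM2r ?sumr_ge0 // => [p _|]; first exact: sqr_ge0.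
apply: le_trans (_ : \sum_p (a p.1 * a p.2) ^+ 2 <= _).
  rewrite [X in _ <= X](bigID off) /= lerDl.
  by apply: sumr_ge0 => p _; exact: sqr_ge0.
rewrite -(pair_big xpredT xpredT (fun k l => (a k * a l) ^+ 2)) /= expr2 /A2 mulr_suml.
by apply: ler_sum => k _; rewrite mulr_sumr; apply: ler_sum => l _; rewrite exprMn.
Qed.

Lemma sqrt_sum_offdiag_le (G : 'I_K -> 'I_K -> F) :
  Num.sqrt (\sum_k \sum_(l | l != k) G k l) <=
  Num.sqrt (K%:R - 1) * Num.sqrt (\sum_k \sum_(l | l != k) G k l).
Proof.
have [K_gt1|K_le1] := ltnP 1 K.
  have K_ge2 : (2 : F) <= K%:R by rewrite ler_nat.
  apply: ler_peMl; first exact: sqrtr_ge0.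
  by rewrite -[X in X <= _]sqrtr1 ler_sqrt; lra.
rewrite big1 ?sqrtr0 ?mulr0 // => k _; apply: big1 => l lk.
by move: lk (ltn_ord k) (ltn_ord l); rewrite -val_eqE /=; lia.
Qed.

End OffDiagonalSums.

Section ComplexModulus.
Variable R : realType.
Local Notation C := R[i].
Local Open Scope complex_scope.

Lemma cabs_ge0 (z : C) : 0 <= cabs z.
Proof. by case: z => a b; rewrite /cabs /= sqrtr_ge0. Qed.

Lemma cabsM (x y : C) : cabs (x * y) = cabs x * cabs y.
Proof. exact: Normc.normcM. Qed.

Lemma cabs_conj (z : C) : cabs (cconj z) = cabs z.
Proof. by case: z => a b; rewrite /cabs /cconj /= sqrrN. Qed.

Lemma cabs_real (r : R) : cabs r%:C = `|r|.
Proof. by rewrite /cabs /= expr0n /= addr0 sqrtr_sqr. Qed.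

Lemma mul_cconj (z : C) : z * cconj z = (cabs z ^+ 2)%:C.
Proof.
case: z => a b; rewrite /cabs /cconj /= sqr_sqrtr ?addr_ge0 ?sqr_ge0 //.
by apply/eqP; rewrite eq_complex /=; apply/andP; split; apply/eqP; ring.
Qed.

Lemma cabs_sum (I : finType) (P : pred I) (G : I -> C) :
  cabs (\sum_(i | P i) G i) <= \sum_(i | P i) cabs (G i).
Proof.
elim/big_ind2: _ => [|x1 y1 x2 y2 h1 h2|//].
  by rewrite /cabs /= expr0n /= addr0 sqrtr0.
exact: le_trans (le_normcD _ _) (lerD h1 h2).
Qed.

Lemma cabs_dot_sqr_le n (a x : 'I_n -> C) :
  cabs (\sum_k a k * x k) ^+ 2 <=
  (\sum_k cabs (a k) ^+ 2) * (\sum_k cabs (x k) ^+ 2).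
Proof.
have := sum_mul_sqr_le xpredT (fun k => cabs (a k)) (fun k => cabs (x k)).
apply: le_trans.
rewrite ler_sqr ?nnegrE ?cabs_ge0 ?sumr_ge0 // => [|k _]; last first.
  by rewrite mulr_ge0 ?cabs_ge0.
by apply: le_trans (cabs_sum _ _) _; apply: ler_sum => k _; rewrite cabsM.
Qed.

Lemma Re_sqr_le_cabs_sqr (z : C) : complex.Re z ^+ 2 <= cabs z ^+ 2.
Proof.
case: z => a b; rewrite /cabs /= sqr_sqrtr ?addr_ge0 ?sqr_ge0 //.
by rewrite lerDl sqr_ge0.
Qed.

Lemma cabs_expj (t : R) : cabs (expj t) = 1.
Proof. by rewrite /cabs /expj /= cos2Dsin2 sqrtr1. Qed.

Lemma expj0 : expj 0 = 1 :> C.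
Proof. by rewrite /expj cos0 sin0. Qed.

Lemma cconj_expjM (a b : R) : cconj (expj a) * expj b = expj (b - a).
Proof.
rewrite /expj /cconj /= cosB sinB.
by apply/eqP; rewrite eq_complex /=; apply/andP; split; apply/eqP; ring.
Qed.

End ComplexModulus.

Section OrthonormalRows.
Variable R : realType.
Local Notation C := R[i].
Local Open Scope complex_scope.

Definition vnorm2 m (v : 'cV[C]_m) : R := \sum_j cabs (v j 0) ^+ 2.
Definition row_norm2 m n (W : 'M[C]_(m, n)) (i : 'I_m) : R := \sum_c cabs (W i c) ^+ 2.

Lemma row_norm2_ge0 m n (W : 'M[C]_(m, n)) i : 0 <= row_norm2 W i.
Proof. by apply: sumr_ge0 => j _; exact: sqr_ge0. Qed.

Lemma mxHE m n (A : 'M[C]_(m, n)) i j : mxH A i j = cconj (A j i).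
Proof. by rewrite !mxE. Qed.

Lemma mxH_mul m n p (A : 'M[C]_(m, n)) (B : 'M[C]_(n, p)) :
  mxH (A *m B) = mxH B *m mxH A.
Proof. by rewrite /mxH /cconj (map_mxM conjc) trmx_mul. Qed.

Lemma mxHK m n (A : 'M[C]_(m, n)) : mxH (mxH A) = A.
Proof. by apply/matrixP => i j; rewrite !mxE /cconj conjcK. Qed.

Lemma mxH_mul_self m (v : 'cV[C]_m) : (mxH v *m v) 0 0 = (vnorm2 v)%:C.
Proof.
rewrite !mxE /vnorm2 rmorph_sum; apply: eq_bigr => j _.
by rewrite !mxE mulrC mul_cconj.
Qed.

(* Test the lower bound on x = X W^H e_i: then A x = W W^H e_i has squared norm
   and i-th entry both equal to |row_i W|^2, and Cauchy-Schwarz on that entry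
   gives |row_i W|^4 <= |row_i A|^2 |x|^2. *)
Lemma row_norm2_le_lower_bound n K r (W : 'M[C]_(n, r)) (A : 'M[C]_(n, K))
    (X : 'M[C]_(K, r)) (c : R) :
  mxH W *m W = 1%:M -> W = A *m X -> 0 < c ->
  (forall x : 'cV[C]_K, c * vnorm2 x <= vnorm2 (A *m x)) ->
  forall i, row_norm2 W i <= row_norm2 A i / c.
Proof.
move=> WW WAX c_gt0 A_lb i; set t := row_norm2 W i.
pose y : 'cV[C]_r := mxH (row i W); pose x := X *m y.
have Wy_Ax : W *m y = A *m x by rewrite /x WAX mulmxA.
have Wy_i : (W *m y) i 0 = t%:C.
  rewrite mxE /t /row_norm2 rmorph_sum; apply: eq_bigr => k _.
  by rewrite !mxE mul_cconj.
have y_t : vnorm2 y = t.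
  by apply: eq_bigr => k _; rewrite !mxE cabs_conj.
have Wy_t : vnorm2 (W *m y) = t.
  apply: complexI; rewrite -mxH_mul_self mxH_mul mulmxA -(mulmxA (mxH y)) WW.
  by rewrite mulmx1 mxH_mul_self y_t.
have t_ge0 : 0 <= t := row_norm2_ge0 W i.
have cs : t ^+ 2 <= row_norm2 A i * vnorm2 x.
  have -> : t ^+ 2 = cabs ((W *m y) i 0) ^+ 2 by rewrite Wy_i cabs_real ger0_norm.
  rewrite Wy_Ax mxE; exact: (cabs_dot_sqr_le (fun k => A i k) (fun k => x k 0)).
have cx : c * vnorm2 x <= t by rewrite -Wy_t Wy_Ax; exact: A_lb.
have A_ge0 := row_norm2_ge0 A i.
have ct2 : c * t ^+ 2 <= row_norm2 A i * t.
  have := ler_wpM2l (ltW c_gt0) cs; have := ler_wpM2l A_ge0 cx; move=> *; lra.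
have [->|t_neq0] := eqVneq t 0; first by rewrite divr_ge0 // ltW.
have t_gt0 : 0 < t by rewrite lt_def t_neq0 t_ge0.
by rewrite ler_pdivlMr // -(ler_pM2r t_gt0) mulrAC -expr2 mulrC.
Qed.

Lemma gram_lower_bound n K (A : 'M[C]_(n, K)) (M : R) (b : 'I_K -> 'I_K -> R) :
  (forall k, (mxH A *m A) k k = M%:C) ->
  (forall k l, l != k -> cabs ((mxH A *m A) k l) <= b k l) ->
  forall x : 'cV[C]_K,
    M * vnorm2 x - \sum_k \sum_(l | l != k) cabs (x k 0) * b k l * cabs (x l 0)
    <= vnorm2 (A *m x).
Proof.
move=> G_diag G_off x; set G := mxH A *m A.
set O := \sum_k \sum_(l | l != k) cconj (x k 0) * G k l * x l 0.
have Ax_quad : (vnorm2 (A *m x))%:C = (M * vnorm2 x)%:C + O.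
  transitivity (\sum_k \sum_l cconj (x k 0) * G k l * x l 0).
    rewrite -mxH_mul_self mxH_mul mulmxA -(mulmxA (mxH x)) -/G mxE.
    rewrite exchange_big /=; apply: eq_bigr => l _; rewrite mxE mulr_suml.
    by apply: eq_bigr => k _; rewrite !mxE.
  rewrite /O /vnorm2 mulr_sumr rmorph_sum -big_split /=; apply: eq_bigr => k _.
  rewrite (bigD1 k) //= G_diag; congr (_ + _).
  by rewrite rmorphM /= -mul_cconj; ring.
have O_le : cabs O <= \sum_k \sum_(l | l != k) cabs (x k 0) * b k l * cabs (x l 0).
  apply: le_trans (cabs_sum _ _) _; apply: ler_sum => k _.
  apply: le_trans (cabs_sum _ _) _; apply: ler_sum => l lk.
  by rewrite !cabsM cabs_conj ler_wpM2r ?cabs_ge0 // ler_wpM2l ?cabs_ge0 ?G_off.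
have O_eq : O = (vnorm2 (A *m x) - M * vnorm2 x)%:C.
  by rewrite rmorphB /= Ax_quad addrC addKr.
by move: O_le; rewrite O_eq cabs_real ler_norml => /andP[+ _]; lra.
Qed.

End OrthonormalRows.

Section DirichletKernel.
Variable R : realType.
Local Notation C := R[i].
Local Open Scope complex_scope.

Definition dirichlet (n : nat) (y : R) : C := \sum_(q < n) expj (2 * pi * y * q%:R).

Definition dirichlet_ratio (n : nat) (x : R) : R :=
  sin (pi * n%:R * x) ^+ 2 / sin (pi * x) ^+ 2.

Lemma expjMr (t r : R) : expj t * r%:C = Complex (cos t * r) (sin t * r).
Proof. by apply/eqP; rewrite eq_complex /=; apply/andP; split; apply/eqP; ring. Qed.

(* The closed form of the geometric sum, multiplied out to avoid dividing by
   [sin (pi * y)]. *)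
Lemma dirichlet_mul_sin n y : dirichlet n y * (sin (pi * y))%:C =
  expj ((n%:R - 1) * (pi * y)) * (sin (n%:R * (pi * y)))%:C.
Proof.
elim: n => [|n IH]; first by rewrite /dirichlet big_ord0 !mul0r sin0 rmorph0 mulr0.
rewrite /dirichlet big_ord_recr /= mulrDl -/(dirichlet n y) IH !expjMr.
set a := pi * y; set u := n%:R * a.
have -> : (n%:R - 1) * a = u - a by rewrite /u; ring.
have -> : 2 * pi * y * n%:R = u + u by rewrite /u /a; ring.
have -> : n.+1%:R * a = u + a by rewrite /u -natr1; ring.
have -> : (n.+1%:R - 1) * a = u by rewrite /u -natr1; ring.
apply/eqP; rewrite eq_complex /=; apply/andP; split; apply/eqP;
  rewrite ?cosB ?sinB ?cosD ?sinD; ring.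
Qed.

Lemma cabs_dirichlet_sqr_mul_sin n y :
  cabs (dirichlet n y) ^+ 2 * sin (pi * y) ^+ 2 = sin (pi * n%:R * y) ^+ 2.
Proof.
have : cabs (dirichlet n y * (sin (pi * y))%:C) ^+ 2 =
       cabs (expj ((n%:R - 1) * (pi * y)) * (sin (n%:R * (pi * y)))%:C) ^+ 2.
  by rewrite dirichlet_mul_sin.
rewrite !cabsM cabs_expj mul1r !cabs_real !exprMn !real_normK ?num_real //.
by move=> ->; rewrite mulrA (mulrC _ pi).
Qed.

Lemma cabs_dirichlet_le n y : cabs (dirichlet n y) <= n%:R.
Proof.
apply: le_trans (cabs_sum _ _) _.
by under eq_bigr do rewrite cabs_expj; rewrite sumr_const card_ord.
Qed.

Lemma dirichlet_ratioE n y :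
  sin (pi * y) != 0 -> dirichlet_ratio n y = cabs (dirichlet n y) ^+ 2.
Proof. by move=> h; rewrite /dirichlet_ratio -cabs_dirichlet_sqr_mul_sin mulfK // sqrf_eq0. Qed.

Lemma dirichlet_ratio_le n y : dirichlet_ratio n y <= n%:R ^+ 2.
Proof.
have [h|h] := eqVneq (sin (pi * y)) 0.
  by rewrite /dirichlet_ratio h expr0n /= invr0 mulr0 sqr_ge0.
rewrite dirichlet_ratioE // ler_sqr ?nnegrE ?cabs_ge0 ?ler0n //.
exact: cabs_dirichlet_le.
Qed.

Lemma sin_sqr_addpi_int (a : R) (m : int) : sin (a + pi * m%:~R) ^+ 2 = sin a ^+ 2.
Proof.
have addpi_nat (b : R) (k : nat) : sin (b + pi *+ k) ^+ 2 = sin b ^+ 2.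
  rewrite alternatingn; last exact: sinDpi.
  by rewrite exprMn -exprM mulnC exprM sqrrN !expr1n mul1r.
case: m => k; first by rewrite mulr_natr addpi_nat.
by rewrite NegzE mulrNz -(addpi_nat _ k.+1) mulrN mulr_natr addrNK.
Qed.

Lemma dirichlet_ratio_add_int n x (m : int) :
  dirichlet_ratio n (x + m%:~R) = dirichlet_ratio n x.
Proof.
rewrite /dirichlet_ratio [pi * (x + _)]mulrDr sin_sqr_addpi_int.
have -> : pi * n%:R * (x + m%:~R) = pi * n%:R * x + pi * (n%:Z * m)%:~R.
  by rewrite intrM /=; ring.
by rewrite sin_sqr_addpi_int.
Qed.

Lemma dirichlet_ratioN n x : dirichlet_ratio n (- x) = dirichlet_ratio n x.
Proof. by rewrite /dirichlet_ratio !mulrN !sinN !sqrrN. Qed.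

Lemma cos_pi4_sqr : cos (pi / 4) ^+ 2 = 1 / 2 :> R.
Proof.
have := cos_mulr2n (pi / 4 : R).
have -> : (pi / 4 : R) *+ 2 = pi / 2 by rewrite -mulr_natr; field.
rewrite cos_pihalf; lra.
Qed.

Lemma cos_pi4_le (t : R) : 0 <= t <= pi / 4 -> cos (pi / 4) <= cos t.
Proof.
move=> /andP[t_ge0 t_le]; have pi_gt0 := pi_gt0 R.
have [->|t_neq] := eqVneq t (pi / 4); first exact: lexx.
apply/ltW; rewrite ltr_cos ?in_itv /= ?t_ge0; first by rewrite lt_def eq_sym t_neq t_le.
- lra.
- apply/andP; split; lra.
Qed.

(* At [1 / (8 n)] every term of the kernel has phase in [0, pi / 4], so its
   real part is at least [n cos (pi / 4)]. *)
Lemma dirichlet_ratio_near0 n : (0 < n)%N ->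
  n%:R ^+ 2 / 2 <= dirichlet_ratio n (1 / (8 * n%:R)).
Proof.
move=> n_gt0; have pi_gt0 := pi_gt0 R.
have n_pos : (0 : R) < n%:R by rewrite ltr0n.
set x := 1 / (8 * n%:R).
have x_gt0 : 0 < x by rewrite divr_gt0 // mulr_gt0.
have xn : x * n%:R = 1 / 8 by rewrite /x; field; rewrite pnatr_eq0 -lt0n.
have sin_neq0 : sin (pi * x) != 0.
  rewrite gt_eqF // sin_gt0_pi // mulr_gt0 //=.
  have : (1 : R) <= n%:R by rewrite ler1n.
  nra.
rewrite dirichlet_ratioE //; apply: le_trans (Re_sqr_le_cabs_sqr _).
have cos_ge0 : 0 <= cos (pi / 4) :> R by apply: cos_ge0_pihalf; lra.
have Re_ge : n%:R * cos (pi / 4) <= complex.Re (dirichlet n x).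
  have -> : n%:R * cos (pi / 4) = \sum_(q < n) cos (pi / 4) :> R.
    by rewrite sumr_const card_ord mulr_natl.
  rewrite /dirichlet raddf_sum; apply: ler_sum => q _ /=.
  apply: cos_pi4_le; rewrite !mulr_ge0 ?ler0n ?pi_ge0 ?(ltW x_gt0) //=.
  have : x * q%:R <= 1 / 8.
    by rewrite -xn; apply: (ler_wpM2l (ltW x_gt0)); rewrite ler_nat ltnW.
  nra.
have : (n%:R * cos (pi / 4)) ^+ 2 <= complex.Re (dirichlet n x) ^+ 2.
  by rewrite ler_sqr ?nnegrE ?mulr_ge0 ?ler0n //; apply: le_trans Re_ge; rewrite mulr_ge0.
rewrite exprMn cos_pi4_sqr; lra.
Qed.

End DirichletKernel.

Section Separation.
Variable R : realType.

Lemma gdist_le_half (z : R) : gdist z <= 1 / 2.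
Proof.
rewrite /gdist; case: ifP => // /negbT; rewrite -ltNge.
have : (Num.ceil z)%:~R <= (Num.floor z)%:~R + 1 :> R.
  by rewrite Num.Theory.ceil_floor intrD lerD2l; case: (z \isn't a Num.int).
lra.
Qed.

Lemma gdist_norm_periodic_even (h : R -> R) :
  (forall x (m : int), h (x + m%:~R) = h x) -> (forall x, h (- x) = h x) ->
  forall z, h (gdist `|z|) = h z.
Proof.
move=> h_periodic h_even z.
have -> : h (gdist `|z|) = h `|z|.
  rewrite /gdist; case: ifP => _; first by rewrite addrC h_periodic h_even.
  by rewrite -[_ - _]addrC -intrN addrC h_periodic.
have [z_ge0|z_lt0] := leP 0 z; first by rewrite ger0_norm.
by rewrite ltr0_norm // h_even.
Qed.

Lemma xi_t_le_gdist K (T : R) (f : 'I_K -> R) k l :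
  k != l -> xi_t T f <= gdist (T * `|f k - f l|).
Proof. by move=> kl; apply: le_trans (bigmin_le _ k _) _; exact: bigmin_le_cond. Qed.

Lemma dirichlet_ratio_le_betaQ n (xi x : R) :
  xi <= x -> x <= 1 / 2 -> dirichlet_ratio n x <= betaQ n xi.
Proof.
move=> xi_le x_le; apply: sup_upper_bound.
  split; first by exists (dirichlet_ratio n x), x => //=; rewrite in_itv /= xi_le x_le.
  by exists (n%:R ^+ 2) => _ [y _ <-]; exact: dirichlet_ratio_le.
by exists x => //=; rewrite in_itv /= xi_le x_le.
Qed.

Lemma cabs_dirichlet_sqr_le_betaQ n (xi y : R) :
  0 < xi -> xi <= gdist `|y| -> cabs (dirichlet n y) ^+ 2 <= betaQ n xi.
Proof.
move=> xi_gt0 xi_le; set x := gdist `|y|.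
have x_gt0 : 0 < x := lt_le_trans xi_gt0 xi_le.
have x_le : x <= 1 / 2 := gdist_le_half _.
have sin_sqr_xy : sin (pi * x) ^+ 2 = sin (pi * y) ^+ 2.
  rewrite /x; apply: (@gdist_norm_periodic_even (fun t => sin (pi * t) ^+ 2)) => [t m|t].
    by rewrite mulrDr sin_sqr_addpi_int.
  by rewrite mulrN sinN sqrrN.
have sin_x : sin (pi * x) != 0.
  have pi_gt0 := pi_gt0 R.
  by rewrite gt_eqF // sin_gt0_pi // mulr_gt0 //=; nra.
have sin_y : sin (pi * y) != 0 by rewrite -sqrf_eq0 -sin_sqr_xy sqrf_eq0.
rewrite -dirichlet_ratioE // -(gdist_norm_periodic_even (dirichlet_ratio_add_int n)
  (dirichlet_ratioN n)).
exact: dirichlet_ratio_le_betaQ.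
Qed.

(* If two frequencies were aliased ([xi_t <= 0]), [betaQ] would be of order
   [Q ^ 2], which the hypothesis [K sqrt betaQ <= Q] rules out as soon as [K >= 2]. *)
Lemma xi_t_gt0 Q K (T : R) (f : 'I_K -> R) : (0 < Q)%N -> (1 < K)%N ->
  K%:R * Num.sqrt (betaQ Q (xi_t T f)) <= Q%:R -> 0 < xi_t T f.
Proof.
move=> Q_gt0 K_gt1 K_le; rewrite ltNge; apply/negP => xi_le0.
have Q_pos : (0 : R) < Q%:R by rewrite ltr0n.
have beta_ge : Q%:R ^+ 2 / 2 <= betaQ Q (xi_t T f).
  apply: le_trans (dirichlet_ratio_near0 R Q_gt0) _.
  apply: dirichlet_ratio_le_betaQ.
    by apply: le_trans xi_le0 _; rewrite divr_ge0 ?mulr_ge0 ?ler0n.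
  rewrite ler_pdivrMr ?mulr_gt0 //.
  have : (1 : R) <= Q%:R by rewrite ler1n.
  lra.
have K_ge2 : (2 : R) <= K%:R by rewrite ler_nat.
have beta_ge0 : 0 <= betaQ Q (xi_t T f).
  by apply: le_trans beta_ge; rewrite divr_ge0 ?sqr_ge0.
move: K_le beta_ge (sqr_sqrtr beta_ge0) (sqrtr_ge0 (betaQ Q (xi_t T f))).
set b := betaQ _ _; set s := Num.sqrt b => K_le beta_ge s_sqr s_ge0.
have : 2 * s <= Q%:R by nra.
nra.
Qed.

End Separation.

Section CompactSVD.
Variable R : realType.
Local Notation C := R[i].
Local Open Scope complex_scope.

Definition sv_diag r (rho : 'I_r -> R) : 'M[C]_r := diag_mx (\row_c Complex (rho c) 0).
Definition sv_inv r (rho : 'I_r -> R) : 'M[C]_r := diag_mx (\row_c (rho c)^-1%:C).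

Lemma sv_diag_inv r (rho : 'I_r -> R) :
  (forall c, 0 < rho c) -> sv_diag rho *m sv_inv rho = 1%:M.
Proof.
move=> rho_gt0; rewrite mulmx_diag; apply/matrixP => i j; rewrite !mxE.
have [->|_] := eqVneq i j; last by rewrite !mulr0n.
by rewrite !mulr1n complexr0 -rmorphM mulfV ?gt_eqF.
Qed.

Lemma mxH_sv_diag r (rho : 'I_r -> R) : mxH (sv_diag rho) = sv_diag rho.
Proof.
apply/matrixP => i j; rewrite !mxE eq_sym.
by have [->|_] := eqVneq; rewrite ?mulr1n ?mulr0n /cconj /= ?oppr0 ?rmorph0.
Qed.

Lemma compact_svd_left m n r (Z : 'M[C]_(m, n)) U (rho : 'I_r -> R) V :
  compact_svd Z U rho V -> U = Z *m V *m sv_inv rho.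
Proof.
case=> _ VV rho_gt0 ->; rewrite -/(sv_diag rho) -!mulmxA (mulmxA (mxH V)) VV mul1mx.
by rewrite sv_diag_inv // mulmx1.
Qed.

Lemma compact_svd_right m n r (Z : 'M[C]_(m, n)) U (rho : 'I_r -> R) V :
  compact_svd Z U rho V -> V = mxH Z *m U *m sv_inv rho.
Proof.
case=> UU _ rho_gt0 ->; rewrite -/(sv_diag rho) !mxH_mul mxHK mxH_sv_diag.
by rewrite -!mulmxA (mulmxA (mxH U)) UU mul1mx sv_diag_inv // mulmx1.
Qed.

End CompactSVD.

Section RadarMatrices.
Variable R : realType.
Local Notation C := R[i].
Local Open Scope complex_scope.

Lemma Dmat_gram Q K (T : R) (f : 'I_K -> R) k l :
  (mxH (Dmat Q T f) *m Dmat Q T f) k l = dirichlet Q ((f l - f k) * T).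
Proof.
rewrite mxE; apply: eq_bigr => q _; rewrite !mxE cconj_expjM.
by congr expj; ring.
Qed.

Lemma Dmat_gram_diag Q K (T : R) (f : 'I_K -> R) k :
  (mxH (Dmat Q T f) *m Dmat Q T f) k k = Q%:R%:C.
Proof.
rewrite Dmat_gram subrr mul0r /dirichlet.
under eq_bigr do rewrite mulr0 mul0r expj0.
by rewrite sumr_const card_ord rmorph_nat.
Qed.

Lemma Dmat_gram_offdiag_le Q K (T : R) (f : 'I_K -> R) k l :
  (0 < Q)%N -> 0 < T -> K%:R * Num.sqrt (betaQ Q (xi_t T f)) <= Q%:R -> l != k ->
  cabs ((mxH (Dmat Q T f) *m Dmat Q T f) k l) <= Num.sqrt (betaQ Q (xi_t T f)).
Proof.
move=> Q_gt0 T_gt0 K_le lk; rewrite Dmat_gram.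
have K_gt1 : (1 < K)%N.
  by move: lk (ltn_ord k) (ltn_ord l); rewrite -val_eqE /=; lia.
have xi_le : xi_t T f <= gdist `|(f l - f k) * T|.
  rewrite normrM (gtr0_norm T_gt0) mulrC distrC.
  by apply: xi_t_le_gdist; rewrite eq_sym.
have := cabs_dirichlet_sqr_le_betaQ Q (xi_t_gt0 Q_gt0 K_gt1 K_le) xi_le.
move=> le_beta; have beta_ge0 := le_trans (sqr_ge0 _) le_beta.
by rewrite -(ger0_norm (cabs_ge0 _)) -sqrtr_sqr ler_sqrt.
Qed.

Lemma row_norm2_Dmat Q K (T : R) (f : 'I_K -> R) q : row_norm2 (Dmat Q T f) q = K%:R.
Proof.
rewrite /row_norm2; under eq_bigr do rewrite mxE cabs_expj expr1n.
by rewrite sumr_const card_ord.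
Qed.

Lemma GmatE N Lmax K (L : 'I_K -> nat) (s : 'cV[C]_N) k p :
  Gmat Lmax L s k p = \sum_(i < N) (p == i + L k :> nat)%N%:R * s i 0.
Proof. by rewrite !mxE; apply: eq_bigr => i _; rewrite !mxE. Qed.

Lemma cabs_Gmat_le1 N Lmax K (L : 'I_K -> nat) (s : 'cV[C]_N) k p :
  (forall n, cabs (s n 0) = 1) -> cabs (Gmat Lmax L s k p) <= 1.
Proof.
move=> s_unimodular; rewrite GmatE.
have [i0 /eqP p_eq|none] := pickP (fun i : 'I_N => p == i + L k :> nat)%N.
  rewrite (bigD1 i0) //= p_eq eqxx mul1r big1 ?addr0 ?s_unimodular // => i ne.
  suff /negbTE -> : (i0 + L k != i + L k)%N by rewrite mul0r.
  by rewrite eqn_add2r; apply: contra ne => /eqP /val_inj ->.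
rewrite big1 ?cabs_real ?normr0 // => i _.
by rewrite (negbTE (negbT (none i))) mul0r.
Qed.

Lemma Gmat_gram N Lmax K (L : 'I_K -> nat) (s : 'cV[C]_N) :
  (forall k, (L k <= Lmax)%N) -> forall k l,
  (Gmat Lmax L s *m mxH (Gmat Lmax L s)) k l = gammaS s ((L l)%:Z - (L k)%:Z).
Proof.
move=> L_le k l; rewrite mxE /gammaS.
under eq_bigr do rewrite [mxH _ _ _]mxE GmatE mulr_suml.
rewrite exchange_big /=; apply: eq_bigr => i _.
have i_lt : (i + L k < N + Lmax)%N by have := ltn_ord i; have := L_le k; lia.
rewrite (bigD1 (Ordinal i_lt)) //= eqxx mul1r big1 => [|p /negbTE p_neq]; last first.
  by rewrite -val_eqE /= in p_neq; rewrite p_neq !mul0r.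
rewrite addr0 mxE GmatE /cconj rmorph_sum mulr_sumr [RHS]big_mkcond /=.
apply: eq_bigr => j _; rewrite rmorphM rmorph_nat.
have -> : (i%:Z - j%:Z == (L l)%:Z - (L k)%:Z) = (i + L k == j + L l)%N.
  by apply/idP/idP => /eqP h; apply/eqP; lia.
by case: (i + L k == j + L l)%N; rewrite ?mul1r ?mul0r ?mulr0.
Qed.

Lemma gammaS0 N (s : 'cV[C]_N) : (forall n, cabs (s n 0) = 1) -> gammaS s 0 = N%:R%:C.
Proof.
move=> s_unimodular; rewrite /gammaS -[in RHS](card_ord N) -sumr_const rmorph_sum.
apply: eq_bigr => i _; rewrite (eq_bigl (pred1 i)) => [|j]; last first.
  by rewrite subr_eq0 eqz_nat eq_sym.
by rewrite big_pred1_eq mul_cconj s_unimodular expr1n.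
Qed.

End RadarMatrices.

Section Coherence.
Variable R : realType.
Local Notation C := R[i].

Lemma coherence_le n K r (W : 'M[C]_(n, r)) (b : R) : 0 <= b ->
  (forall i, row_norm2 W i <= b) -> coherence K W <= n%:R / K%:R * b.
Proof.
move=> b_ge0 W_le; rewrite /coherence ler_wpM2l ?divr_ge0 ?ler0n //.
by apply: bigmax_le => // i _; exact: W_le.
Qed.

Lemma row_norm2_le_coherence n K r (W : 'M[C]_(n, r)) i : (0 < K)%N ->
  row_norm2 W i <= K%:R / n%:R * coherence K W.
Proof.
move=> K_gt0; have n_gt0 : (0 < n)%N := leq_ltn_trans (leq0n i) (ltn_ord i).
have -> : K%:R / n%:R * coherence K W = \big[Num.max/0]_i row_norm2 W i.
  rewrite /coherence mulrA [X in X * _ = _](_ : _ = 1) ?mul1r //.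
  by field; rewrite !pnatr_eq0 -!lt0n K_gt0 n_gt0.
exact: (le_bigmax _ (row_norm2 W) i).
Qed.

Lemma coherence_cross_entry_le n1 n2 K r (W1 : 'M[C]_(n1, r)) (W2 : 'M[C]_(n2, r)) i j :
  (0 < K)%N ->
  cabs ((W1 *m mxH W2) i j) <= Num.sqrt K%:R *
    Num.max (coherence K W1) (coherence K W2) * Num.sqrt (K%:R / (n1%:R * n2%:R)).
Proof.
move=> K_gt0; set mu := Num.max _ _.
have n1_gt0 : (0 < n1)%N := leq_ltn_trans (leq0n i) (ltn_ord i).
have n2_gt0 : (0 < n2)%N := leq_ltn_trans (leq0n j) (ltn_ord j).
have row1 := row_norm2_le_coherence W1 i K_gt0.
have row2 := row_norm2_le_coherence W2 j K_gt0.
have w1 : 0 < K%:R / n1%:R :> R by rewrite divr_gt0 ?ltr0n.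
have w2 : 0 < K%:R / n2%:R :> R by rewrite divr_gt0 ?ltr0n.
have mu1_le : coherence K W1 <= mu by rewrite le_max lexx.
have mu2_le : coherence K W2 <= mu by rewrite le_max lexx orbT.
have mu1_ge0 : 0 <= coherence K W1.
  by rewrite -(pmulr_rge0 _ w1); apply: le_trans row1; exact: row_norm2_ge0.
have entry_cs : cabs ((W1 *m mxH W2) i j) ^+ 2 <= row_norm2 W1 i * row_norm2 W2 j.
  have -> : row_norm2 W2 j = \sum_c cabs (cconj (W2 j c)) ^+ 2.
    by apply: eq_bigr => c _; rewrite cabs_conj.
  by rewrite mxE (eq_bigr (fun c => W1 i c * cconj (W2 j c))) => [|c _];
    rewrite ?mxE //; exact: cabs_dot_sqr_le.
rewrite -(ler_sqr (x:=_) (y:=_)) ?nnegrE ?cabs_ge0 ?mulr_ge0 ?sqrtr_ge0 //;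
  last exact: le_trans mu1_le.
apply: le_trans entry_cs _.
apply: le_trans (_ : K%:R / n1%:R * mu * (K%:R / n2%:R * mu) <= _).
  apply: ler_pM; rewrite ?row_norm2_ge0 //.
    by apply: le_trans row1 _; rewrite ler_pM2l.
  by apply: le_trans row2 _; rewrite ler_pM2l.
rewrite !exprMn !sqr_sqrtr ?ler0n ?divr_ge0 ?mulr_ge0 ?ler0n //.
have -> : K%:R / n1%:R * mu * (K%:R / n2%:R * mu) =
          K%:R * mu ^+ 2 * (K%:R / (n1%:R * n2%:R)) :> R.
  by field; rewrite !pnatr_eq0 -!lt0n n1_gt0 n2_gt0.
exact: lexx.
Qed.

End Coherence.

Section RadarCoherence.
Variable R : realType.
Local Notation C := R[i].
Local Open Scope complex_scope.

Lemma coherence_left_le Q N K Lmax (T : R) (s : 'cV[C]_N) (L : 'I_K -> nat)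
    (beta : 'I_K -> C) (f : 'I_K -> R) r U (rho : 'I_r -> R) V :
  (0 < Q)%N -> (0 < K)%N -> 0 < T ->
  K%:R * Num.sqrt (betaQ Q (xi_t T f)) <= Q%:R ->
  compact_svd (Zmat Q Lmax T f beta L s) U rho V ->
  coherence K U <= Q%:R / (Q%:R - (K%:R - 1) * Num.sqrt (betaQ Q (xi_t T f))).
Proof.
move=> Q_gt0 K_gt0 T_gt0 K_le svd; case: (svd) => UU _ _ _.
set b := Num.sqrt _ in K_le *; set c := Q%:R - _.
have b_ge0 : 0 <= b := sqrtr_ge0 _.
have c_gt0 : 0 < c.
  have Q_pos : (0 : R) < Q%:R by rewrite ltr0n.
  rewrite /c; have [b0|b_neq0] := eqVneq b 0; first by rewrite b0 mulr0 subr0.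
  have : 0 < b by rewrite lt_def b_neq0 b_ge0.
  lra.
have D_lb (x : 'cV[C]_K) : c * vnorm2 x <= vnorm2 (Dmat Q T f *m x).
  have := gram_lower_bound (Dmat_gram_diag Q T f)
    (fun k l => Dmat_gram_offdiag_le Q_gt0 T_gt0 K_le) x.
  have := offdiag_const_le (fun k => cabs (x k 0)) b_ge0.
  rewrite /c /vnorm2 /=; lra.
have U_fact : U = Dmat Q T f *m (Lmat beta *m Gmat Lmax L s *m V *m sv_inv rho).
  by rewrite (compact_svd_left svd) /Zmat !mulmxA.
have U_row i : row_norm2 U i <= K%:R / c.
  by rewrite -(row_norm2_Dmat T f i); exact: row_norm2_le_lower_bound UU U_fact c_gt0 D_lb i.
apply: le_trans (coherence_le K _ U_row) _; first by rewrite divr_ge0 ?ler0n ?ltW.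
by rewrite mulrA divfK // pnatr_eq0 -lt0n.
Qed.

Lemma coherence_right_le Q N K Lmax (T : R) (s : 'cV[C]_N) (L : 'I_K -> nat)
    (beta : 'I_K -> C) (f : 'I_K -> R) r U (rho : 'I_r -> R) V :
  (0 < K)%N -> (forall n, cabs (s n 0) = 1) -> (forall k, (L k <= Lmax)%N) ->
  compact_svd (Zmat Q Lmax T f beta L s) U rho V ->
  let den := N%:R - Num.sqrt (K%:R - 1) *
    Num.sqrt (\sum_(i < K) \sum_(j < K | j != i)
               cabs (gammaS s ((L i)%:Z - (L j)%:Z)) ^+ 2) in
  0 < den -> coherence K V <= (N + Lmax)%:R / den.
Proof.
move=> K_gt0 s_unimodular L_le svd den den_gt0; case: (svd) => _ VV _ _.
set G := Gmat Lmax L s.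
set B := \sum_(i < K) \sum_(j < K | j != i) cabs (gammaS s ((L i)%:Z - (L j)%:Z)) ^+ 2.
have B_ge0 : 0 <= B by do 2!apply: sumr_ge0 => ? _; exact: sqr_ge0.
set c := N%:R - Num.sqrt B.
have den_le : den <= c by rewrite lerD2l lerN2 sqrt_sum_offdiag_le.
have c_gt0 : 0 < c := lt_le_trans den_gt0 den_le.
have G_gram k l : (mxH (mxH G) *m mxH G) k l = gammaS s ((L l)%:Z - (L k)%:Z).
  by rewrite mxHK Gmat_gram.
have GH_lb (x : 'cV[C]_K) : c * vnorm2 x <= vnorm2 (mxH G *m x).
  have G_diag k : (mxH (mxH G) *m mxH G) k k = N%:R%:C.
    by rewrite G_gram subrr gammaS0.
  have G_off k l : l != k -> cabs ((mxH (mxH G) *m mxH G) k l) <=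
      cabs (gammaS s ((L l)%:Z - (L k)%:Z)) by rewrite G_gram.
  have := gram_lower_bound G_diag G_off x.
  have := offdiag_cauchy_schwarz_le (fun k => cabs (x k 0))
    (fun k l => cabs (gammaS s ((L l)%:Z - (L k)%:Z))).
  rewrite /= (sum_offdiag_swap (fun k l => cabs (gammaS s ((L k)%:Z - (L l)%:Z)) ^+ 2)).
  rewrite -/B /c /vnorm2; lra.
have V_fact : V = mxH G *m (mxH (Dmat Q T f *m Lmat beta) *m U *m sv_inv rho).
  by rewrite (compact_svd_right svd) /Zmat mxH_mul !mulmxA.
have GH_row p : row_norm2 (mxH G) p <= K%:R.
  have -> : K%:R = \sum_(k < K) (1 : R) by rewrite sumr_const card_ord.
  apply: ler_sum => k _; rewrite mxHE cabs_conj -(expr1n _ 2) ler_sqr ?nnegrE ?cabs_ge0 //.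
  exact: cabs_Gmat_le1.
have V_row p : row_norm2 V p <= K%:R / c.
  apply: le_trans (row_norm2_le_lower_bound VV V_fact c_gt0 GH_lb p) _.
  by rewrite ler_pM2r ?invr_gt0.
apply: le_trans (coherence_le K _ V_row) _; first by rewrite divr_ge0 ?ler0n ?ltW.
rewrite mulrA divfK ?pnatr_eq0 -?lt0n // ler_wpM2l ?ler0n //.
by rewrite lef_pV2 ?posrE.
Qed.

End RadarCoherence.

Unset Implicit Arguments.

Theorem theorem4 (R : realType) (Q N K Lmax : nat) (T : R)
  (s : 'cV[R[i]]_N) (L : 'I_K -> nat) (beta : 'I_K -> R[i]) (f : 'I_K -> R) :
  (0 < Q)%N -> (0 < N)%N -> (0 < K)%N -> 0 < T ->
  (forall n, cabs (s n ord0) = 1) ->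
  (forall k, (L k <= Lmax)%N) ->
  injective f ->
  let bQ := betaQ Q (xi_t T f) in
  K%:R * Num.sqrt bQ <= Q%:R ->
  forall (r : nat) (U : 'M[R[i]]_(Q, r)) (rho : 'I_r -> R) (V : 'M[R[i]]_(N + Lmax, r)),
    compact_svd (Zmat Q Lmax T f beta L s) U rho V ->
    let muU := coherence K U in
    let muV := coherence K V in
    let denV := N%:R - Num.sqrt (K%:R - 1) *
        Num.sqrt (\sum_(i < K) \sum_(j < K | j != i)
                   cabs (gammaS s ((L i)%:Z - (L j)%:Z)) ^+ 2) in
    let mu0 := Num.max muU muV in
    let mu1 := Num.sqrt K%:R * mu0 in
    [/\ muU <= Q%:R / (Q%:R - (K%:R - 1) * Num.sqrt bQ),
        (0 < denV -> muV <= (N + Lmax)%:R / denV),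
        Num.max muU muV <= mu0 &
        forall (i : 'I_Q) (j : 'I_(N + Lmax)),
          cabs ((U *m mxH V) i j) <= mu1 * Num.sqrt (K%:R / (Q%:R * (N + Lmax)%:R))].
Proof.
move=> Q_gt0 _ K_gt0 T_gt0 s_unimodular L_le _ bQ K_le r U rho V svd muU muV denV mu0 mu1.
split=> //.
- exact: coherence_left_le Q_gt0 K_gt0 T_gt0 K_le svd.
- exact: coherence_right_le K_gt0 s_unimodular L_le svd.
- by move=> i j; exact: coherence_cross_entry_le.
Qed.
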